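(* If $f(z)=\sum_{k=1}^\infty b_k z^k$ is analytic in $\mathbb{D}$ with $\|f\|_{\mathcal{B}}\le 1$, then $$ \sum_{k=1}^n k|b_k|^2\le \frac{n^n}{(n-1)^{n-1}} \quad\text{for all } n\ge 2. $$ Moreover, $$ \frac{32}{27}\, nB_n^2\le \frac{n^n}{(n-1)^{n-1}}\le \frac{4}{e}\, nB_n^2 \quad\text{for all } n\ge 2. $$
   Context: $\mathbb{D}$ is the open unit disc. The Bloch space $\mathcal{B}$ consists of analytic functions $f$ on $\mathbb{D}$ with finite norm $\|f\|_{\mathcal{B}}=|f(0)|+\sup_{z\in\mathbb{D}}(1-|z|^2)|f'(z)|$. For $n\ge 2$, $B_n=\frac{n+1}{2n}\left(\frac{n+1}{n-1}\right)^{(n-1)/2}$. *)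

From Stdlib Require Import Reals.
From Coquelicot Require Import Coquelicot.
Open Scope R_scope.

Definition Bn (n : nat) : R :=
  (INR n + 1) / (2 * INR n) * Rpower ((INR n + 1) / (INR n - 1)) ((INR n - 1) / 2).

Definition Qn (n : nat) : R := INR n ^ n / (INR n - 1) ^ (n - 1).

Definition in_disc (z : C) : Prop := Cmod z < 1.

(* ||f||_B <= 1, with the sup written out pointwise:
   |f(0)| + (1-|z|^2)|f'(z)| <= 1 for all z in D, f' the complex derivative. *)
Definition bloch_norm_le1 (f : C -> C) : Prop :=
  forall z : C, in_disc z ->
    exists l : C, is_derive (K := C_AbsRing) (V := C_NormedModule) f z l /\
      Cmod (f 0%C) + (1 - Cmod z ^ 2) * Cmod l <= 1.

From Stdlib Require Import Reals Lra Lia.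
From Coquelicot Require Import Coquelicot.
Open Scope R_scope.

(* For 0 <= rho < 1 the Bloch condition bounds |f'(rho e^(i phi))| by 1/(1 - rho^2) for every
   phi.  Parseval's identity for the power series of f' on the circle of radius rho, used in its
   discrete form on the (N+1)-st roots of unity for truncations, turns this into
   sum_k k^2 |b_k|^2 t^(k-1) <= 1/(1-t)^2 with t = rho^2: the derivative of
   sum_k k |b_k|^2 t^k is dominated by that of t/(1-t), hence sum_k k |b_k|^2 t^k <= t/(1-t).
   At t = (n-1)/n, where t^n <= t^k for k <= n, this gives
   sum_(k<=n) k |b_k|^2 <= (n-1)/t^n = n^n/(n-1)^(n-1).
   For the second claim, n^n/(n-1)^(n-1) = 4 a_n n B_n^2 with a_n = (n/(n+1))^(n+1), which
   increases from a_2 = 8/27 and stays below 1/e. *)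

(* Coquelicot's [sum_n] lives in an abstract [AbelianMonoid]; these restatements put the
   equalities in [R], so that [ring], [lra] and rewriting apply to them directly. *)
Lemma sum_n_R_S (a : nat -> R) n : sum_n a (S n) = sum_n a n + a (S n) :> R.
Proof. exact (sum_Sn a n). Qed.

Lemma sum_n_R_ext (a b : nat -> R) N :
  (forall k, (k <= N)%nat -> a k = b k :> R) -> sum_n a N = sum_n b N :> R.
Proof. exact (sum_n_ext_loc a b N). Qed.

Lemma sum_n_R_plus (a b : nat -> R) n : sum_n (fun k => a k + b k) n = sum_n a n + sum_n b n :> R.
Proof. exact (sum_n_plus a b n). Qed.

Lemma sum_n_R_scal (c : R) (a : nat -> R) n : sum_n (fun k => c * a k) n = c * sum_n a n :> R.
Proof. exact (sum_n_mult_l c a n). Qed.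

Lemma sum_n_R_le (a b : nat -> R) N :
  (forall k, (k <= N)%nat -> a k <= b k) -> sum_n a N <= sum_n b N.
Proof.
  induction N as [|N IH]; intros Hab.
  - rewrite !sum_O. apply Hab; lia.
  - rewrite !sum_n_R_S. apply Rplus_le_compat; [apply IH; intros k Hk|]; apply Hab; lia.
Qed.

Lemma sum_n_R_nonneg_incr (a : nat -> R) m n :
  (forall k, 0 <= a k) -> (m <= n)%nat -> sum_n a m <= sum_n a n.
Proof.
  intros Ha Hmn. induction Hmn as [|n _ IH]; [lra|].
  rewrite sum_n_R_S. specialize (Ha (S n)). lra.
Qed.

Lemma sum_n_R_zero (a : nat -> R) N : (forall k, (k <= N)%nat -> a k = 0) -> sum_n a N = 0 :> R.
Proof.
  intros Ha. rewrite (sum_n_ext_loc _ (fun _ => 0)), sum_n_const; [apply Rmult_0_r | exact Ha].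
Qed.

Lemma sum_n_R_kronecker (g : nat -> R) k N :
  (k <= N)%nat -> sum_n (fun l => if Nat.eqb k l then g l else 0) N = g k :> R.
Proof.
  induction N as [|N IH]; intros Hk.
  - replace k with 0%nat by lia. rewrite sum_O. reflexivity.
  - rewrite sum_n_R_S. destruct (Nat.eq_dec k (S N)) as [->|Hne].
    + rewrite Nat.eqb_refl, sum_n_R_zero; [ring|].
      intros l Hl. destruct (Nat.eqb_spec (S N) l); [lia | reflexivity].
    + rewrite IH by lia. destruct (Nat.eqb_spec k (S N)); [lia | ring].
Qed.

Lemma sum_n_R_sqr (a : nat -> R) N :
  sum_n a N ^ 2 = sum_n (fun k => sum_n (fun l => a k * a l) N) N :> R.
Proof.
  transitivity (sum_n (fun k => mult (a k) (sum_n a N)) N).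
  - rewrite sum_n_mult_r. unfold mult; simpl. now rewrite Rmult_1_r.
  - apply sum_n_ext. intros k. symmetry. exact (sum_n_mult_l (a k) a N).
Qed.

Lemma sum_cos_telescoping x N :
  2 * sin (x / 2) * sum_n (fun j => cos (INR j * x)) N = sin ((INR N + 1 / 2) * x) + sin (x / 2).
Proof.
  induction N as [|N IH].
  - rewrite sum_O. simpl INR. replace ((0 + 1 / 2) * x) with (x / 2) by lra.
    rewrite Rmult_0_l, cos_0. ring.
  - rewrite sum_n_R_S, Rmult_plus_distr_l, IH, S_INR.
    replace ((INR N + 1 / 2) * x) with ((INR N + 1) * x - x / 2) by lra.
    replace ((INR N + 1 + 1 / 2) * x) with ((INR N + 1) * x + x / 2) by lra.
    rewrite sin_plus, sin_minus. ring.
Qed.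

Lemma sum_sin_telescoping x N :
  2 * sin (x / 2) * sum_n (fun j => sin (INR j * x)) N = cos (x / 2) - cos ((INR N + 1 / 2) * x).
Proof.
  induction N as [|N IH].
  - rewrite sum_O. simpl INR. replace ((0 + 1 / 2) * x) with (x / 2) by lra.
    rewrite Rmult_0_l, sin_0. ring.
  - rewrite sum_n_R_S, Rmult_plus_distr_l, IH, S_INR.
    replace ((INR N + 1 / 2) * x) with ((INR N + 1) * x - x / 2) by lra.
    replace ((INR N + 1 + 1 / 2) * x) with ((INR N + 1) * x + x / 2) by lra.
    rewrite cos_plus, cos_minus. ring.
Qed.

Lemma sum_cos_sin_full_turn x N :
  sin (x / 2) <> 0 -> cos (INR (S N) * x) = 1 -> sin (INR (S N) * x) = 0 ->
  sum_n (fun j => cos (INR j * x)) N = 0 :> R /\ sum_n (fun j => sin (INR j * x)) N = 0 :> R.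
Proof.
  intros Hs Hc Hsn. rewrite S_INR in Hc, Hsn.
  pose proof (sum_cos_telescoping x N) as C. pose proof (sum_sin_telescoping x N) as S.
  replace ((INR N + 1 / 2) * x) with ((INR N + 1) * x - x / 2) in C, S by lra.
  rewrite sin_minus, Hc, Hsn in C. rewrite cos_minus, Hc, Hsn in S.
  split; apply (Rmult_eq_reg_l (2 * sin (x / 2))); lra.
Qed.

Lemma sin_neq_0_small y : -PI < y < PI -> y <> 0 -> sin y <> 0.
Proof.
  intros Hy Hy0. destruct (Rlt_or_le y 0) as [Hneg|Hpos].
  - pose proof (sin_gt_0 (- y) ltac:(lra) ltac:(lra)) as Hs. rewrite sin_neg in Hs. lra.
  - pose proof (sin_gt_0 y ltac:(lra) ltac:(lra)). lra.
Qed.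

Lemma cos_sin_2PI_mult k : cos (2 * INR k * PI) = 1 /\ sin (2 * INR k * PI) = 0.
Proof.
  rewrite <- (Rplus_0_l (2 * INR k * PI)), cos_period, sin_period, cos_0, sin_0. now split.
Qed.

Lemma cos_sin_2PI_mult_sub k l :
  cos (2 * INR k * PI - 2 * INR l * PI) = 1 /\ sin (2 * INR k * PI - 2 * INR l * PI) = 0.
Proof.
  rewrite cos_minus, sin_minus.
  destruct (cos_sin_2PI_mult k) as [-> ->], (cos_sin_2PI_mult l) as [-> ->]. split; ring.
Qed.

Lemma sin_PI_frac_neq_0 N k l : (k <= N)%nat -> (l <= N)%nat -> k <> l ->
  sin (PI * ((INR k - INR l) / INR (S N))) <> 0.
Proof.
  intros Hk Hl Hkl. set (r := (INR k - INR l) / INR (S N)).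
  assert (Hr : -1 < r < 1 /\ r <> 0).
  { pose proof (le_INR k N Hk). pose proof (le_INR l N Hl).
    pose proof (pos_INR k). pose proof (pos_INR l). pose proof (not_INR k l Hkl).
    unfold r. rewrite S_INR. split; [split|].
    - apply (Rmult_lt_reg_r (INR N + 1)); [lra|]. field_simplify; lra.
    - apply (Rmult_lt_reg_r (INR N + 1)); [lra|]. field_simplify; lra.
    - apply Rmult_integral_contrapositive_currified; [lra|]. apply Rinv_neq_0_compat. lra. }
  pose proof PI_RGT_0. apply sin_neq_0_small; [split; nra|].
  apply Rmult_integral_contrapositive_currified; lra.
Qed.

Definition node (N j : nat) : R := INR j * (2 * PI / INR (S N)).

Lemma sum_nodes_orthogonal N k l : (k <= N)%nat -> (l <= N)%nat ->
  sum_n (fun j => cos (INR k * node N j - INR l * node N j)) N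
    = (if Nat.eqb k l then INR (S N) else 0) :> R /\
  sum_n (fun j => sin (INR k * node N j - INR l * node N j)) N = 0 :> R.
Proof.
  intros Hk Hl. pose proof (lt_0_INR (S N) ltac:(lia)) as HN.
  destruct (Nat.eqb_spec k l) as [<-|Hkl].
  - split.
    + rewrite (sum_n_ext _ (fun _ => 1)), sum_n_const; [ring|].
      intros j. rewrite Rminus_diag. apply cos_0.
    + rewrite (sum_n_ext _ (fun _ => 0)), sum_n_const; [ring|].
      intros j. rewrite Rminus_diag. apply sin_0.
  - set (x := (INR k - INR l) * (2 * PI / INR (S N))).
    assert (Hx : forall j, INR k * node N j - INR l * node N j = INR j * x)
      by (intros j; unfold node, x; ring).
    rewrite (sum_n_ext _ _ N (fun j => f_equal cos (Hx j))),
      (sum_n_ext _ _ N (fun j => f_equal sin (Hx j))).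
    assert (Hturn : INR (S N) * x = 2 * INR k * PI - 2 * INR l * PI) by (unfold x; field; lra).
    destruct (cos_sin_2PI_mult_sub k l) as [Hc Hs].
    apply sum_cos_sin_full_turn; [|now rewrite Hturn..].
    replace (x / 2) with (PI * ((INR k - INR l) / INR (S N))) by (unfold x; field; lra).
    now apply sin_PI_frac_neq_0.
Qed.

(* Real and imaginary parts of (p k + i q k) e^(i k phi). *)
Definition trig_re (p q : nat -> R) (phi : R) (k : nat) : R :=
  p k * cos (INR k * phi) - q k * sin (INR k * phi).
Definition trig_im (p q : nat -> R) (phi : R) (k : nat) : R :=
  p k * sin (INR k * phi) + q k * cos (INR k * phi).

Lemma trig_sqr_sum p q N phi :
  sum_n (trig_re p q phi) N ^ 2 + sum_n (trig_im p q phi) N ^ 2 =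
  sum_n (fun k => sum_n (fun l =>
      (p k * p l + q k * q l) * cos (INR k * phi - INR l * phi)
    + (p k * q l - q k * p l) * sin (INR k * phi - INR l * phi)) N) N :> R.
Proof.
  rewrite !sum_n_R_sqr, <- sum_n_R_plus. apply sum_n_R_ext. intros k _.
  rewrite <- sum_n_R_plus. apply sum_n_R_ext. intros l _.
  unfold trig_re, trig_im. rewrite cos_minus, sin_minus. ring.
Qed.

Lemma discrete_parseval p q N :
  sum_n (fun j => sum_n (trig_re p q (node N j)) N ^ 2 + sum_n (trig_im p q (node N j)) N ^ 2) N
  = INR (S N) * sum_n (fun k => p k ^ 2 + q k ^ 2) N :> R.
Proof.
  rewrite (sum_n_ext _ _ N (fun j => trig_sqr_sum p q N (node N j))), sum_n_switch,
    <- sum_n_R_scal.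
  apply sum_n_R_ext. intros k Hk. rewrite sum_n_switch.
  rewrite <- (sum_n_R_kronecker (fun l => INR (S N) * (p l ^ 2 + q l ^ 2)) k N Hk).
  apply sum_n_R_ext. intros l Hl.
  rewrite sum_n_R_plus, !sum_n_R_scal.
  destruct (sum_nodes_orthogonal N k l Hk Hl) as [-> ->].
  destruct (Nat.eqb_spec k l) as [<-|]; ring.
Qed.

Lemma Rabs_sum_n_le_Series (a b : nat -> R) N :
  (forall k, Rabs (a k) <= b k) -> ex_series b ->
  Rabs (sum_n a N) <= Rabs (Series a) + (Series b - sum_n b N).
Proof.
  intros Hab Hb.
  assert (Habs : ex_series (fun k => Rabs (a k))).
  { apply (@ex_series_le R_AbsRing R_CompleteNormedModule _ b); [|exact Hb]. intros k.
    change (Rabs (Rabs (a k)) <= b k). rewrite Rabs_Rabsolu. apply Hab. }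
  assert (Htail : ex_series (fun k => Rabs (a (S N + k)%nat)))
    by exact (proj1 (ex_series_incr_n _ (S N)) Habs).
  rewrite (Series_incr_n a (S N)), (Series_incr_n b (S N)), !sum_n_Reals by
    (lia || auto using ex_series_Rabs). simpl pred.
  assert (Hta : Rabs (Series (fun k => a (S N + k)%nat)) <= Series (fun k => b (S N + k)%nat)).
  { eapply Rle_trans; [exact (Series_Rabs _ Htail)|].
    apply Series_le; [|exact (proj1 (ex_series_incr_n _ (S N)) Hb)].
    intros k. split; [apply Rabs_pos | apply Hab]. }
  pose proof (Rabs_triang (sum_f_R0 a N + Series (fun k => a (S N + k)%nat))
                (- Series (fun k => a (S N + k)%nat))) as Htri.
  rewrite Rabs_Ropp in Htri. replace (sum_f_R0 a N + _ + _) with (sum_f_R0 a N) in Htri by ring.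
  lra.
Qed.

Lemma Series_sub_sum_n_small (b : nat -> R) : ex_series b ->
  forall eps, 0 < eps -> exists N0, forall N, (N0 <= N)%nat -> Series b - sum_n b N < eps.
Proof.
  intros Hb eps Heps.
  destruct (Series_correct _ Hb (ball (Series b) (mkposreal eps Heps))) as [N0 HN0];
    [apply locally_ball|].
  exists N0. intros N HN. specialize (HN0 N HN).
  change (Rabs (sum_n b N - Series b) < eps) in HN0. apply Rabs_lt_between in HN0. lra.
Qed.

Lemma sqr_add_sqr_le_of_approx x y X Y M e :
  0 <= e -> 0 <= M -> X ^ 2 + Y ^ 2 <= M ^ 2 ->
  Rabs x <= Rabs X + e -> Rabs y <= Rabs Y + e -> x ^ 2 + y ^ 2 <= (M + 2 * e) ^ 2.
Proof.
  intros He HM HXY Hx Hy.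
  rewrite <- (pow2_abs x), <- (pow2_abs y). rewrite <- (pow2_abs X), <- (pow2_abs Y) in HXY.
  pose proof (Rabs_pos x). pose proof (Rabs_pos y).
  pose proof (Rabs_pos X). pose proof (Rabs_pos Y).
  assert (Rabs X <= M) by nra. assert (Rabs Y <= M) by nra.
  nra.
Qed.

Lemma le_sqr_of_le_sqr_add s M : 0 <= M -> (forall e, 0 < e -> s <= (M + e) ^ 2) -> s <= M ^ 2.
Proof.
  intros HM H. apply Rle_plus_epsilon. intros eps Heps.
  assert (HMs : M < sqrt (M ^ 2 + eps)).
  { rewrite <- (sqrt_pow2 M HM) at 1. apply sqrt_lt_1_alt. split; [nra | lra]. }
  specialize (H (sqrt (M ^ 2 + eps) - M) ltac:(lra)).
  replace (M + (sqrt (M ^ 2 + eps) - M)) with (sqrt (M ^ 2 + eps)) in H by ring.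
  rewrite pow2_sqrt in H by nra. exact H.
Qed.

Lemma Rabs_mul_add_le p q u v :
  Rabs u <= 1 -> Rabs v <= 1 -> Rabs (p * u + q * v) <= Rabs p + Rabs q.
Proof.
  intros Hu Hv. eapply Rle_trans; [apply Rabs_triang|]. rewrite !Rabs_mult.
  pose proof (Rabs_pos p). pose proof (Rabs_pos q).
  pose proof (Rabs_pos u). pose proof (Rabs_pos v).
  nra.
Qed.

Lemma Rabs_trig_re_le p q phi k : Rabs (trig_re p q phi k) <= Rabs (p k) + Rabs (q k).
Proof.
  unfold trig_re, Rminus. rewrite Ropp_mult_distr_r.
  apply Rabs_mul_add_le; [|rewrite Rabs_Ropp]; apply Rabs_le; [apply COS_bound | apply SIN_bound].
Qed.

Lemma Rabs_trig_im_le p q phi k : Rabs (trig_im p q phi k) <= Rabs (p k) + Rabs (q k).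
Proof.
  unfold trig_im. apply Rabs_mul_add_le; apply Rabs_le; [apply SIN_bound | apply COS_bound].
Qed.

Lemma parseval_le (p q : nat -> R) M :
  0 <= M -> ex_series (fun k => Rabs (p k) + Rabs (q k)) ->
  (forall phi, Series (trig_re p q phi) ^ 2 + Series (trig_im p q phi) ^ 2 <= M ^ 2) ->
  forall N, sum_n (fun k => p k ^ 2 + q k ^ 2) N <= M ^ 2.
Proof.
  (* Truncated where the tail of [sum (|p k| + |q k|)] is below e/2, the trigonometric
     polynomials stay below M + e on the whole circle; discrete Parseval at the nodes
     then bounds their coefficients. *)
  intros HM Hb Hbound N. apply le_sqr_of_le_sqr_add; [exact HM|]. intros e He.
  destruct (Series_sub_sum_n_small _ Hb (e / 2) ltac:(lra)) as [N0 HN0].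
  set (N1 := max N N0). specialize (HN0 N1 (Nat.le_max_r N N0)).
  assert (Hpt : forall phi,
    sum_n (trig_re p q phi) N1 ^ 2 + sum_n (trig_im p q phi) N1 ^ 2 <= (M + e) ^ 2).
  { intros phi. replace (M + e) with (M + 2 * (e / 2)) by field.
    apply (sqr_add_sqr_le_of_approx _ _ (Series (trig_re p q phi)) (Series (trig_im p q phi)));
      [lra | exact HM | apply Hbound | |].
    - pose proof (Rabs_sum_n_le_Series _ _ N1 (Rabs_trig_re_le p q phi) Hb). lra.
    - pose proof (Rabs_sum_n_le_Series _ _ N1 (Rabs_trig_im_le p q phi) Hb). lra. }
  assert (Hsum : INR (S N1) * sum_n (fun k => p k ^ 2 + q k ^ 2) N1 <= INR (S N1) * (M + e) ^ 2).
  { rewrite <- discrete_parseval, <- (sum_n_const N1 ((M + e) ^ 2)).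
    apply sum_n_R_le. intros j _. apply Hpt. }
  apply Rmult_le_reg_l in Hsum; [|apply lt_0_INR; lia].
  eapply Rle_trans; [|exact Hsum]. apply sum_n_R_nonneg_incr; [|apply Nat.le_max_l].
  intros k. pose proof (pow2_ge_0 (p k)). pose proof (pow2_ge_0 (q k)). lra.
Qed.

Definition polar (r phi : R) : C := (r * cos phi, r * sin phi).

Lemma Cmod_polar r phi : Cmod (polar r phi) = Rabs r.
Proof.
  unfold Cmod, polar. cbn [fst snd].
  replace ((r * cos phi) ^ 2 + (r * sin phi) ^ 2) with (Rsqr r).
  - apply sqrt_Rsqr_abs.
  - pose proof (sin2_cos2 phi). unfold Rsqr in *. nra.
Qed.

Lemma pow_n_polar r phi k :
  pow_n (K := C_AbsRing) (polar r phi) k = polar (r ^ k) (INR k * phi).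
Proof.
  induction k as [|k IH].
  - unfold polar. simpl. rewrite Rmult_0_l, cos_0, sin_0.
    apply injective_projections; simpl; ring.
  - change (Cmult (polar r phi) (pow_n (K := C_AbsRing) (polar r phi) k)
      = polar (r ^ S k) (INR (S k) * phi)).
    rewrite IH. unfold polar. rewrite S_INR.
    replace ((INR k + 1) * phi) with (phi + INR k * phi) by ring.
    rewrite cos_plus, sin_plus. apply injective_projections; simpl; ring.
Qed.

Lemma is_series_Re_Im (a : nat -> C) (l : C) :
  is_series (K := C_AbsRing) (V := C_NormedModule) a l ->
  is_series (fun k => Re (a k)) (Re l) /\ is_series (fun k => Im (a k)) (Im l).
Proof.
  intros H.
  assert (Hsum : forall n, sum_n a n = (sum_n (fun k => Re (a k)) n, sum_n (fun k => Im (a k)) n)).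
  { induction n as [|n IH].
    - rewrite !sum_O. now destruct (a 0%nat).
    - rewrite !sum_Sn, IH. reflexivity. }
  pose proof (proj1 (@filterlim_locally nat (NormedModule.UniformSpace C_AbsRing C_NormedModule)
    eventually _ (sum_n a) l) H) as Hball.
  split; apply filterlim_locally; intros eps; destruct (Hball eps) as [N HN]; exists N;
    intros n Hn; destruct (HN n Hn) as [H1 H2]; rewrite Hsum in H1, H2; assumption.
Qed.

Lemma CV_radius_gt_of_unit_disk (a : nat -> R) :
  (forall t, Rabs t < 1 -> ex_pseries a t) ->
  forall rho, Rabs rho < 1 -> Rbar_lt (Rabs rho) (CV_radius a).
Proof.
  intros Ha rho Hrho. set (x := (1 + Rabs rho) / 2).
  pose proof (Rabs_pos rho).
  assert (Hx : Rabs x = x) by (apply Rabs_pos_eq; unfold x; lra).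
  assert (Hle : Rbar_le (Rabs x) (CV_radius a)).
  { apply Rbar_not_lt_le. intros Hout. apply (CV_disk_outside a x Hout).
    apply ex_series_lim_0, ex_pseries_R, Ha. unfold x in *; lra. }
  rewrite Hx in Hle. destruct (CV_radius a) as [r| |]; simpl in *; auto; unfold x in *; lra.
Qed.

Lemma Rabs_Im_le_Cmod (z : C) : Rabs (Im z) <= Cmod z.
Proof. eapply Rle_trans; [apply Rmax_r | apply Rmax_Cmod]. Qed.

Lemma Rabs_div_lt (x h eps : R) :
  h <> 0 -> 0 < eps -> Rabs x <= eps / 2 * Rabs h -> Rabs (x / h) < eps.
Proof.
  intros Hh Heps Hx. pose proof (Rabs_pos_lt h Hh).
  unfold Rdiv. rewrite Rabs_mult, Rabs_inv.
  apply (Rmult_lt_reg_r (Rabs h)); [lra|]. rewrite Rmult_assoc, Rinv_l by lra. nra.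
Qed.

(* Coquelicot only differentiates real power series, so the complex derivative of f is
   reached through the real derivative of f along the ray t |-> t e^(i phi). *)
Lemma is_derive_radial (f : C -> C) (l : C) (r phi : R) :
  is_derive (K := C_AbsRing) (V := C_NormedModule) f (polar r phi) l ->
  is_derive (fun t => Re (f (polar t phi))) r (Re (Cmult (polar 1 phi) l)) /\
  is_derive (fun t => Im (f (polar t phi))) r (Im (Cmult (polar 1 phi) l)).
Proof.
  intros [_ Hd]. specialize (Hd (polar r phi) (fun P HP => HP)).
  set (err h := Cminus (Cminus (f (polar (r + h) phi)) (f (polar r phi))) (Cmult (polar h phi) l)).
  assert (Herr : forall eps, 0 < eps -> exists delta : posreal,
      forall h, Rabs h < delta -> Cmod (err h) <= eps * Rabs h).
  { intros eps Heps. destruct (Hd (mkposreal eps Heps)) as [delta Hdelta].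
    exists delta. intros h Hh.
    assert (Hstep : Cminus (polar (r + h) phi) (polar r phi) = polar h phi)
      by (unfold polar; apply injective_projections; simpl; ring).
    assert (Hball : @ball (AbsRing_UniformSpace C_AbsRing) (polar r phi) delta (polar (r + h) phi)).
    { change (Cmod (Cminus (polar (r + h) phi) (polar r phi)) < delta).
      now rewrite Hstep, Cmod_polar. }
    specialize (Hdelta _ Hball).
    change (Cmod (Cminus (Cminus (f (polar (r + h) phi)) (f (polar r phi)))
      (Cmult (Cminus (polar (r + h) phi) (polar r phi)) l))
      <= eps * Cmod (Cminus (polar (r + h) phi) (polar r phi))) in Hdelta.
    now rewrite Hstep, Cmod_polar in Hdelta. }
  split; apply is_derive_Reals; intros eps Heps;
    destruct (Herr (eps / 2) ltac:(lra)) as [delta Hdelta];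
    exists delta; intros h Hh0 Hh; specialize (Hdelta h Hh); cbv beta.
  - replace ((Re (f (polar (r + h) phi)) - Re (f (polar r phi))) / h - Re (Cmult (polar 1 phi) l))
      with (Re (err h) / h) by (unfold err, polar, Re; simpl; field; exact Hh0).
    apply Rabs_div_lt; auto. pose proof (re_le_Cmod (err h)). lra.
  - replace ((Im (f (polar (r + h) phi)) - Im (f (polar r phi))) / h - Im (Cmult (polar 1 phi) l))
      with (Im (err h) / h) by (unfold err, polar, Im; simpl; field; exact Hh0).
    apply Rabs_div_lt; auto. pose proof (Rabs_Im_le_Cmod (err h)). lra.
Qed.

Lemma PSeries_derive_of_is_derive (a : nat -> R) (g : R -> R) (rho d : R) :
  (forall t, Rabs t < 1 -> is_pseries a t (g t)) -> Rabs rho < 1 ->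
  is_derive g rho d -> PSeries (PS_derive a) rho = d.
Proof.
  intros Ha Hrho Hg.
  assert (Hrad := CV_radius_gt_of_unit_disk a (fun t Ht => ex_intro _ _ (Ha t Ht)) rho Hrho).
  assert (Hloc : locally rho (fun t => PSeries a t = g t)).
  { exists (mkposreal (1 - Rabs rho) ltac:(lra)). intros t Ht.
    change (Rabs (t - rho) < 1 - Rabs rho) in Ht.
    apply is_pseries_unique, Ha. pose proof (Rabs_triang_inv t rho). lra. }
  rewrite <- (is_derive_unique _ _ _ Hg).
  symmetry. apply is_derive_unique.
  exact (is_derive_ext_loc _ _ _ _ Hloc (is_derive_PSeries a rho Hrad)).
Qed.

Definition deriv_coef (a : nat -> R) (rho : R) (k : nat) : R := INR k * rho ^ pred k * a k.

Lemma Series_deriv_coef (a : nat -> R) rho :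
  Series (deriv_coef a rho) = PSeries (PS_derive a) rho.
Proof.
  unfold deriv_coef.
  rewrite (Series_incr_1_aux (fun k => INR k * rho ^ pred k * a k)) by (simpl; ring).
  rewrite PSeries_eq. apply Series_ext. intros k.
  transitivity (rho ^ k * PS_derive a k); [unfold PS_derive; simpl pred; ring|].
  now rewrite <- pow_n_pow.
Qed.

Lemma ex_series_Rabs_deriv_coef (a : nat -> R) rho :
  Rbar_lt (Rabs rho) (CV_radius a) -> ex_series (fun k => Rabs (deriv_coef a rho k)).
Proof.
  intros Ha. unfold deriv_coef. apply ex_series_incr_1.
  rewrite <- CV_radius_derive in Ha. eapply ex_series_ext; [|exact (CV_disk_inside _ _ Ha)].
  intros k. unfold PS_derive. simpl pred. f_equal. ring.
Qed.

Lemma le_of_is_derive_nonneg (h dh : R -> R) a c : a <= c ->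
  (forall x, a <= x <= c -> is_derive h x (dh x)) -> (forall x, a < x < c -> 0 <= dh x) ->
  h a <= h c.
Proof.
  intros Hac Hd Hpos. destruct (Rle_lt_or_eq_dec a c Hac) as [Hlt|<-]; [|lra].
  destruct (MVT_cor2 h dh a c Hlt (fun x Hx => proj1 (is_derive_Reals _ _ _) (Hd x Hx)))
    as (x & Hx & Hxac).
  specialize (Hpos x Hxac). nra.
Qed.

Lemma sum_pow_le_of_deriv_le (c : nat -> R) N t0 : c 0%nat = 0 -> 0 <= t0 < 1 ->
  (forall t, 0 <= t < 1 -> sum_n (fun k => c k * (INR k * t ^ pred k)) N <= 1 / (1 - t) ^ 2) ->
  sum_n (fun k => c k * t0 ^ k) N <= t0 / (1 - t0).
Proof.
  intros Hc0 Ht0 Hderiv.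
  set (h t := t / (1 - t) - sum_n (fun k => c k * t ^ k) N).
  set (dh t := 1 / (1 - t) ^ 2 - sum_n (fun k => c k * (INR k * t ^ pred k)) N).
  assert (Hh0 : h 0 = 0).
  { unfold h. rewrite sum_n_R_zero; [field|]. intros [|k] _; simpl; [rewrite Hc0|]; ring. }
  assert (Hmono : h 0 <= h t0).
  { apply (le_of_is_derive_nonneg h dh);
      [lra | | intros x Hx; specialize (Hderiv x ltac:(lra)); unfold dh; lra].
    intros x Hx.
    apply (is_derive_minus (K := R_AbsRing) (V := R_NormedModule)
      (fun t => t / (1 - t)) (fun t => sum_n (fun k => c k * t ^ k) N)).
    - auto_derive; [lra|]. field. lra.
    - apply (is_derive_sum_n (K := R_AbsRing) (V := R_NormedModule) (fun k t => c k * t ^ k)).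
      intros k _. auto_derive; [exact I | ring]. }
  rewrite Hh0 in Hmono. unfold h in Hmono. lra.
Qed.

Lemma pow_le_pow_of_le_1 t m n : 0 <= t <= 1 -> (m <= n)%nat -> t ^ n <= t ^ m.
Proof.
  intros Ht Hmn. induction Hmn as [|n _ IH]; [lra|].
  simpl. pose proof (pow_le t n ltac:(lra)). nra.
Qed.

Lemma pow_mul_sum_n_le (c : nat -> R) N t : (forall k, 0 <= c k) -> 0 <= t <= 1 ->
  t ^ N * sum_n c N <= sum_n (fun k => c k * t ^ k) N.
Proof.
  intros Hc Ht. rewrite <- sum_n_R_scal. apply sum_n_R_le. intros k Hk.
  pose proof (pow_le_pow_of_le_1 t k N Ht Hk). specialize (Hc k). nra.
Qed.

Lemma Qn_eq_div_pow n : (2 <= n)%nat -> Qn n = (INR n - 1) / ((INR n - 1) / INR n) ^ n.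
Proof.
  intros Hn. unfold Qn. assert (HN : 2 <= INR n) by (apply (le_INR 2); exact Hn).
  destruct n as [|m]; [lia|]. replace (S m - 1)%nat with m by lia.
  set (N := INR (S m)) in *. unfold Rdiv. rewrite Rpow_mult_distr, pow_inv. cbn [pow].
  assert ((N - 1) ^ m <> 0) by (apply pow_nonzero; lra).
  assert (N ^ m <> 0) by (apply pow_nonzero; lra).
  field. lra.
Qed.

Section BlochCoefficients.

Variables (f : C -> C) (b : nat -> C).

Hypothesis f_pseries :
  forall z, in_disc z -> is_pseries (K := C_AbsRing) (V := C_NormedModule) b z (f z).

Let b_re (k : nat) : R := Re (b k).
Let b_im (k : nat) : R := Im (b k).

Lemma is_pseries_polar phi t : Rabs t < 1 ->
  is_pseries (trig_re b_re b_im phi) t (Re (f (polar t phi))) /\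
  is_pseries (trig_im b_re b_im phi) t (Im (f (polar t phi))).
Proof.
  intros Ht. assert (Hz : in_disc (polar t phi)) by (unfold in_disc; now rewrite Cmod_polar).
  destruct (is_series_Re_Im _ _ (f_pseries _ Hz)) as [Hre Him].
  split; apply is_pseries_R; [eapply is_series_ext, Hre | eapply is_series_ext, Him]; intros k;
    cbv beta; change (scal ?x ?y) with (Cmult x y); rewrite pow_n_polar;
    unfold polar, trig_re, trig_im, b_re, b_im, Re, Im; simpl; ring.
Qed.

Lemma CV_radius_Re_Im_gt rho : Rabs rho < 1 ->
  Rbar_lt (Rabs rho) (CV_radius b_re) /\ Rbar_lt (Rabs rho) (CV_radius b_im).
Proof.
  intros Hrho.
  rewrite (CV_radius_ext b_re (trig_re b_re b_im 0)), (CV_radius_ext b_im (trig_im b_re b_im 0))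
    by (intros k; unfold trig_re, trig_im; rewrite Rmult_0_r, cos_0, sin_0; ring).
  split; apply CV_radius_gt_of_unit_disk; auto;
    intros t Ht; eexists; apply (is_pseries_polar 0 t Ht).
Qed.

Lemma Series_trig_deriv_coef phi rho l : Rabs rho < 1 ->
  is_derive (K := C_AbsRing) (V := C_NormedModule) f (polar rho phi) l ->
  Series (trig_re (deriv_coef b_re rho) (deriv_coef b_im rho) phi) = Re (Cmult (polar 1 phi) l) /\
  Series (trig_im (deriv_coef b_re rho) (deriv_coef b_im rho) phi) = Im (Cmult (polar 1 phi) l).
Proof.
  intros Hrho Hd. destruct (is_derive_radial f l rho phi Hd) as [Dre Dim].
  rewrite <- (PSeries_derive_of_is_derive _ _ rho _
      (fun t Ht => proj1 (is_pseries_polar phi t Ht)) Hrho Dre),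
    <- (PSeries_derive_of_is_derive _ _ rho _
      (fun t Ht => proj2 (is_pseries_polar phi t Ht)) Hrho Dim),
    <- !Series_deriv_coef.
  split; apply Series_ext; intros k; unfold trig_re, trig_im, deriv_coef; ring.
Qed.

Hypothesis f_bloch : bloch_norm_le1 f.

Lemma sum_sqr_deriv_coef_le t N : 0 <= t < 1 ->
  sum_n (fun k => INR k ^ 2 * Cmod (b k) ^ 2 * t ^ pred k) N <= 1 / (1 - t) ^ 2.
Proof.
  intros Ht. set (rho := sqrt t).
  assert (Hrho : 0 <= rho < 1).
  { split; [apply sqrt_pos|]. rewrite <- sqrt_1. apply sqrt_lt_1; lra. }
  assert (Hrho2 : rho ^ 2 = t) by (apply pow2_sqrt; lra).
  assert (Habs : Rabs rho < 1) by (rewrite Rabs_pos_eq; lra).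
  replace (1 / (1 - t) ^ 2) with ((1 / (1 - rho ^ 2)) ^ 2) by (rewrite Hrho2; field; lra).
  replace (sum_n _ N)
    with (sum_n (fun k => deriv_coef b_re rho k ^ 2 + deriv_coef b_im rho k ^ 2) N).
  2:{ apply sum_n_R_ext. intros k _. unfold deriv_coef, b_re, b_im.
      rewrite Cmod2_alt, <- Hrho2, <- pow_mult, Nat.mul_comm, pow_mult. ring. }
  apply parseval_le.
  - apply Rlt_le, Rdiv_lt_0_compat; nra.
  - destruct (CV_radius_Re_Im_gt rho Habs) as [Hre Him].
    exact (ex_series_plus _ _ (ex_series_Rabs_deriv_coef _ _ Hre)
      (ex_series_Rabs_deriv_coef _ _ Him)).
  - intros phi.
    assert (Hz : in_disc (polar rho phi)) by (unfold in_disc; now rewrite Cmod_polar).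
    destruct (f_bloch _ Hz) as (l & Hd & Hbound).
    destruct (Series_trig_deriv_coef phi rho l Habs Hd) as [-> ->].
    rewrite <- Cmod2_alt, Cmod_mult, Cmod_polar, Rabs_R1, Rmult_1_l.
    rewrite Cmod_polar, Rabs_pos_eq in Hbound by lra.
    pose proof (Cmod_ge_0 (f 0%C)). pose proof (Cmod_ge_0 l).
    apply pow_incr. split; [lra|].
    apply (Rmult_le_reg_l (1 - rho ^ 2)); [nra|]. field_simplify; nra.
Qed.

Lemma sum_coef_le_Qn n : (2 <= n)%nat -> sum_n (fun k => INR k * Cmod (b k) ^ 2) n <= Qn n.
Proof.
  intros Hn. set (c k := INR k * Cmod (b k) ^ 2).
  rewrite Qn_eq_div_pow by exact Hn.
  assert (HnR : 2 <= INR n) by (apply (le_INR 2); exact Hn).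
  set (t := (INR n - 1) / INR n).
  assert (Ht : 0 < t < 1).
  { unfold t. split; [apply Rdiv_lt_0_compat; lra|].
    apply (Rmult_lt_reg_r (INR n)); [lra|]. field_simplify; lra. }
  assert (Hweighted : sum_n (fun k => c k * t ^ k) n <= INR n - 1).
  { replace (INR n - 1) with (t / (1 - t)) by (unfold t; field; lra).
    apply sum_pow_le_of_deriv_le; [unfold c; simpl; ring | lra |].
    intros s Hs. eapply Rle_trans; [|exact (sum_sqr_deriv_coef_le s n Hs)].
    right. apply sum_n_R_ext. intros k _. unfold c. ring. }
  assert (Hc : forall k, 0 <= c k)
    by (intros k; apply Rmult_le_pos; [apply pos_INR | apply pow2_ge_0]).
  pose proof (pow_mul_sum_n_le c n t Hc ltac:(lra)) as Hpow.
  assert (Htn : 0 < t ^ n) by (apply pow_lt; lra).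
  apply (Rmult_le_reg_l (t ^ n)); [exact Htn|].
  replace (t ^ n * ((INR n - 1) / t ^ n)) with (INR n - 1) by (field; lra).
  lra.
Qed.

End BlochCoefficients.

Definition ratio_pow (n : nat) : R := (INR n / (INR n + 1)) ^ S n.

Lemma Qn_eq_ratio_pow n : (2 <= n)%nat -> Qn n = 4 * ratio_pow n * (INR n * Bn n ^ 2).
Proof.
  intros Hn. unfold Qn, Bn, ratio_pow. set (N := INR n).
  assert (HN : 2 <= N) by (apply (le_INR 2); exact Hn).
  assert (Hr : 0 < (N + 1) / (N - 1)) by (apply Rdiv_lt_0_compat; lra).
  replace (((N + 1) / (2 * N) * Rpower ((N + 1) / (N - 1)) ((N - 1) / 2)) ^ 2)
    with (((N + 1) / (2 * N)) ^ 2 * Rpower ((N + 1) / (N - 1)) ((N - 1) / 2 + (N - 1) / 2))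
    by (rewrite Rpower_plus; ring).
  replace ((N - 1) / 2 + (N - 1) / 2) with (INR (n - 1))
    by (rewrite minus_INR by lia; simpl; fold N; field).
  rewrite Rpower_pow by exact Hr.
  destruct n as [|m]; [lia|]. replace (S m - 1)%nat with m by lia.
  unfold Rdiv. rewrite !Rpow_mult_distr, !pow_inv.
  assert ((N - 1) ^ m <> 0) by (apply pow_nonzero; lra).
  assert ((N + 1) ^ m <> 0) by (apply pow_nonzero; lra).
  simpl. field. lra.
Qed.

Lemma exp_pow x k : exp x ^ k = exp (INR k * x).
Proof.
  induction k as [|k IH].
  - simpl. now rewrite Rmult_0_l, exp_0.
  - rewrite S_INR. simpl. rewrite IH, <- exp_plus. f_equal. ring.
Qed.

Lemma ratio_pow_le_exp n : ratio_pow n <= exp (-1).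
Proof.
  unfold ratio_pow. pose proof (pos_INR n) as HN.
  replace (INR n / (INR n + 1)) with (1 + - / (INR n + 1)) by (field; lra).
  assert (Hinv : 0 < / (INR n + 1) <= 1).
  { split; [apply Rinv_0_lt_compat; lra|]. rewrite <- Rinv_1. apply Rinv_le_contravar; lra. }
  eapply Rle_trans.
  - apply pow_incr. split; [lra|]. left. apply exp_ineq1. lra.
  - rewrite exp_pow, S_INR. right. f_equal. field. lra.
Qed.

Lemma ratio_pow_le_succ n : (1 <= n)%nat -> ratio_pow n <= ratio_pow (S n).
Proof.
  intros Hn. unfold ratio_pow. rewrite S_INR. set (N := INR n).
  assert (HN : 1 <= N) by (apply (le_INR 1); exact Hn).
  (* a_(n+1) / a_n = (N+1)/(N+2) * (1 + x)^(n+1); Bernoulli's inequality handles the power. *)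
  set (x := / (N * (N + 2))).
  assert (Hx : 0 < x) by (apply Rinv_0_lt_compat; nra).
  assert (Hbern : 1 + INR (S n) * x <= (1 + x) ^ S n) by (apply Rle_pow_lin; lra).
  rewrite S_INR in Hbern. fold N in Hbern.
  change (((N + 1) / (N + 1 + 1)) ^ S (S n))
    with ((N + 1) / (N + 1 + 1) * ((N + 1) / (N + 1 + 1)) ^ S n).
  replace ((N + 1) / (N + 1 + 1)) with (N / (N + 1) * (1 + x)) at 2 by (unfold x; field; lra).
  rewrite Rpow_mult_distr.
  assert (Hpos : 0 <= (N / (N + 1)) ^ S n) by (apply pow_le, Rdiv_le_0_compat; lra).
  assert (Hgain : 1 <= (N + 1) / (N + 1 + 1) * (1 + (N + 1) * x)).
  { replace ((N + 1) / (N + 1 + 1) * (1 + (N + 1) * x)) with (1 + / (N * (N + 2) ^ 2))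
      by (unfold x; field; lra).
    assert (0 < / (N * (N + 2) ^ 2)) by (apply Rinv_0_lt_compat; nra). lra. }
  assert (0 <= (N + 1) / (N + 1 + 1)) by (apply Rdiv_le_0_compat; lra).
  assert ((N + 1) / (N + 1 + 1) * (1 + (N + 1) * x) <= (N + 1) / (N + 1 + 1) * (1 + x) ^ S n)
    by (apply Rmult_le_compat_l; lra).
  nra.
Qed.

Lemma ratio_pow_ge n : (2 <= n)%nat -> 8 / 27 <= ratio_pow n.
Proof.
  intros Hn. induction Hn as [|n Hn IH].
  - unfold ratio_pow. simpl. lra.
  - eapply Rle_trans; [exact IH|]. apply ratio_pow_le_succ. lia.
Qed.

Lemma Qn_Bn_bounds n : (2 <= n)%nat ->
  32 / 27 * INR n * Bn n ^ 2 <= Qn n /\ Qn n <= 4 / exp 1 * INR n * Bn n ^ 2.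
Proof.
  intros Hn. rewrite Qn_eq_ratio_pow by exact Hn.
  assert (0 <= INR n * Bn n ^ 2) by (apply Rmult_le_pos; [apply pos_INR | apply pow2_ge_0]).
  pose proof (ratio_pow_ge n Hn). pose proof (ratio_pow_le_exp n) as Hexp.
  replace (exp (-1)) with (/ exp 1) in Hexp by (rewrite <- exp_Ropp; f_equal; ring).
  unfold Rdiv. split; nra.
Qed.

Lemma sum_f_1_eq_sum_n (g : nat -> R) n : (1 <= n)%nat -> g 0%nat = 0 -> sum_f 1 n g = sum_n g n.
Proof.
  intros Hn Hg0. rewrite sum_f_rw by lia. rewrite sum_n_Reals. simpl. rewrite Hg0. ring.
Qed.

Theorem proposition4p1 (f : C -> C) (b : nat -> C) :
  b 0%nat = 0%C ->
  (forall z : C, in_disc z -> is_pseries (K := C_AbsRing) (V := C_NormedModule) b z (f z)) ->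
  bloch_norm_le1 f ->
  forall n : nat, (2 <= n)%nat ->
    sum_f 1 n (fun k => INR k * Cmod (b k) ^ 2) <= Qn n /\
    32 / 27 * INR n * Bn n ^ 2 <= Qn n /\
    Qn n <= 4 / exp 1 * INR n * Bn n ^ 2.
Proof.
  (* [b 0] enters with weight [INR 0 = 0]. *)
  intros _ Hser Hbloch n Hn. split.
  - rewrite sum_f_1_eq_sum_n by (simpl; ring || lia).
    exact (sum_coef_le_Qn f b Hser Hbloch n Hn).
  - exact (Qn_Bn_bounds n Hn).
Qed.
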